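(* Assume $\|\phi_{y,x}\|\le\Phi$ for all inputs $x$ and outputs $y$, for some $\Phi>0$. Then there exist $M_1,M_2>0$ such that for all $\theta\in\Theta$, $$\frac1{N_1}\sum_{(x,y_w,y_\ell)\in\mathcal{D}_{\mathrm{DPO}}}\|g_{\mathrm{DPO}}(\theta;x,y_w,y_\ell)\|^2\le M_1^2,\qquad \frac1{N_2}\sum_{(x,y)\in\mathcal{D}_{\mathrm{SFT}}}\|g_{\mathrm{SFT}}(\theta;x,y)\|^2\le M_2^2.$$
   Context: $\Theta\subseteq\mathbb{R}^d$. Policy model: for a finite output set $\mathcal{Y}$, $\pi_\theta(y\mid x)=\exp(\theta^\top\phi_{y,x})/\sum_{y'\in\mathcal{Y}}\exp(\theta^\top\phi_{y',x})$ with feature vectors $\phi_{y,x}\in\mathbb{R}^d$; the reference policy is $\pi_{\mathrm{ref}}=\pi_{\theta_{\mathrm{ref}}}$ for fixed $\theta_{\mathrm{ref}}$. Datasets $\mathcal{D}_{\mathrm{DPO}}=\{(x^{(i)},y_w^{(i)},y_\ell^{(i)})\}_{i=1}^{N_1}$ and $\mathcal{D}_{\mathrm{SFT}}=\{(x^{(i)},y^{(i)})\}_{i=1}^{N_2}$. With $\sigma$ the sigmoid and $\beta>0$, $h_\beta(\theta;x,y_w,y_\ell)=\beta\log\frac{\pi_\theta(y_w|x)}{\pi_{\mathrm{ref}}(y_w|x)}-\beta\log\frac{\pi_\theta(y_\ell|x)}{\pi_{\mathrm{ref}}(y_\ell|x)}$, $g_{\mathrm{DPO}}(\theta;x,y_w,y_\ell)=-(1-\sigma(h_\beta(\theta;x,y_w,y_\ell)))\nabla_\theta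 h_\beta(\theta;x,y_w,y_\ell)$, and $g_{\mathrm{SFT}}(\theta;x,y)=-\nabla_\theta\pi_\theta(y|x)/\pi_\theta(y|x)$. *)

From HB Require Import structures.
From mathcomp Require Import all_boot all_order all_algebra.
From mathcomp Require Import all_classical all_reals all_analysis.
Set Implicit Arguments. Unset Strict Implicit. Unset Printing Implicit Defensive.
Import Order.TTheory GRing.Theory Num.Theory.
Import numFieldNormedType.Exports.
Local Open Scope ring_scope.

Section Defs.
Variables (R : realType) (d : nat).

Definition dotp (u v : 'rV[R]_d) : R := \sum_(i < d) u 0 i * v 0 i.
Definition enorm (v : 'rV[R]_d) : R := Num.sqrt (dotp v v).

Definition grad (f : 'rV[R]_d -> R) (theta : 'rV[R]_d) : 'rV[R]_d :=
  \row_(i < d) derive f theta (delta_mx 0 i).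

Definition sigmoid (z : R) : R := 1 / (1 + expR (- z)).

Variables (X : Type) (Y : finType).

Definition policy (phi : X -> Y -> 'rV[R]_d) (theta : 'rV[R]_d) (x : X) (y : Y) : R :=
  expR (dotp theta (phi x y)) / \sum_(y' : Y) expR (dotp theta (phi x y')).

Definition h_beta (phi : X -> Y -> 'rV[R]_d) (theta_ref : 'rV[R]_d) (beta : R)
  (theta : 'rV[R]_d) (x : X) (yw yl : Y) : R :=
  beta * ln (policy phi theta x yw / policy phi theta_ref x yw)
  - beta * ln (policy phi theta x yl / policy phi theta_ref x yl).

Definition g_DPO phi theta_ref beta (theta : 'rV[R]_d) (x : X) (yw yl : Y) : 'rV[R]_d :=
  - ((1 - sigmoid (h_beta phi theta_ref beta theta x yw yl))
      *: grad (fun t => h_beta phi theta_ref beta t x yw yl) theta).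

Definition g_SFT phi (theta : 'rV[R]_d) (x : X) (y : Y) : 'rV[R]_d :=
  - ((policy phi theta x y)^-1 *: grad (fun t => policy phi t x y) theta).

End Defs.

(* The DPO margin [h_beta] is affine in
   theta, with gradient [beta (phi x yw - phi x yl)], and [1 - sigmoid] lies in
   [0, 1]; hence [|g_DPO|^2 <= beta^2 |phi x yw - phi x yl|^2 <= (2 beta Phi)^2].
   For the softmax policy, [grad log pi_theta(y|x) = phi x y - E[phi x]] with
   the expectation over [y' ~ pi_theta(.|x)]; by Jensen [|E[phi x]|^2 <=
   E[|phi x|^2] <= Phi^2], so [|g_SFT|^2 <= (2 Phi)^2]. *)
From HB Require Import structures.
From mathcomp Require Import all_boot all_order all_algebra.
From mathcomp Require Import all_classical all_reals all_analysis.
From mathcomp Require Import ring lra.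
Set Implicit Arguments. Unset Strict Implicit. Unset Printing Implicit Defensive.
Import Order.TTheory GRing.Theory Num.Theory.
Import numFieldNormedType.Exports.
Local Open Scope ring_scope.

Section RealFacts.
Variable R : realType.

Lemma sqr_subr_le (a b : R) : (a - b) ^+ 2 <= 2 * a ^+ 2 + 2 * b ^+ 2.
Proof. have := sqr_ge0 (a + b); lra. Qed.

Lemma sigmoid_ge0 (z : R) : 0 <= sigmoid z.
Proof. by rewrite /sigmoid divr_ge0 // addr_ge0 ?expR_ge0. Qed.

Lemma sigmoid_le1 (z : R) : sigmoid z <= 1.
Proof.
by rewrite /sigmoid ler_pdivrMr ?addr_gt0 ?expR_gt0 // mul1r lerDl expR_ge0.
Qed.

Lemma sumr_expR_gt0 (I : finType) (i0 : I) (f : I -> R) :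
  0 < \sum_(i : I) expR (f i).
Proof.
rewrite (bigD1 i0) //= ltr_pwDl ?expR_gt0 //.
by rewrite sumr_ge0 // => i _; rewrite expR_ge0.
Qed.

(* The variance [\sum_j w j * (a j - m)^2] around the mean [m] is nonnegative. *)
Lemma sqr_convex_comb_le (I : finType) (w a : I -> R) :
  (forall j, 0 <= w j) -> \sum_j w j = 1 ->
  (\sum_j w j * a j) ^+ 2 <= \sum_j w j * a j ^+ 2.
Proof.
move=> w_ge0 w_sum1; set m := \sum_j w j * a j.
have var_ge0 : 0 <= \sum_j w j * (a j - m) ^+ 2.
  by apply: sumr_ge0 => j _; rewrite mulr_ge0 ?sqr_ge0.
have varE : \sum_j w j * (a j - m) ^+ 2 =
    \sum_j w j * a j ^+ 2 - 2 * m * m + m ^+ 2 * \sum_j w j.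
  rewrite {2}/m [2 * m * _]big_distrr [m ^+ 2 * _]big_distrr -sumrB -big_split /=.
  by apply: eq_bigr => j _; ring.
by move: var_ge0; rewrite varE w_sum1; lra.
Qed.

Lemma avg_le (T : Type) (s : seq T) (f : T -> R) (K : R) :
  0 <= K -> (forall z, f z <= K) -> (size s)%:R^-1 * \sum_(z <- s) f z <= K.
Proof.
move=> K_ge0 f_le; case: s => [|z s]; first by rewrite big_nil mulr0.
rewrite ler_pdivrMl ?ltr0n //.
apply: (le_trans (ler_sum _ (fun z _ => f_le z))).
by rewrite big_const_seq count_predT iter_addr_0 mulr_natl.
Qed.

Lemma is_derive_big (V W : normedModType R) (I : Type) (r : seq I)
    (F : I -> V -> W) (dF : I -> W) (x v : V) :
  (forall i, is_derive x v (F i) (dF i)) ->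
  is_derive x v (fun y => \sum_(i <- r) F i y) (\sum_(i <- r) dF i).
Proof.
move=> F_der; elim: r => [|i r IH].
  rewrite big_nil; under eq_fun do rewrite big_nil; exact: is_derive_cst.
rewrite big_cons; under eq_fun do rewrite big_cons; exact: is_deriveD.
Qed.

Lemma is_derive_expR_affine (a b : R) :
  is_derive (0 : R) 1 (fun h : R => expR (h * a + b)) (expR b * a).
Proof.
have line_der : is_derive (0 : R) 1 (fun h : R => h * a + b) a.
  by apply: is_derive_eq; rewrite scale0r add0r addr0 -[a%:A]/(a * 1) mulr1.
have := is_derive1_comp (is_derive_expR _) line_der.
by rewrite mul0r add0r.
Qed.

End RealFacts.

Section EuclideanRows.
Variables (R : realType) (d : nat).
Implicit Types (t u v w : 'rV[R]_d) (f : 'rV[R]_d -> R).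

Lemma derive_lineE f t v : derive f t v = derive (fun h : R => f (h *: v + t)) 0 1.
Proof.
rewrite /derive; do 2 f_equal; apply/funext => h /=.
by rewrite scale0r add0r addr0 -[h%:A]/(h * 1) mulr1.
Qed.

Lemma grad_affine f t w :
  (forall i (h : R), f (h *: delta_mx 0 i + t) = f t + h * w 0 i) -> grad f t = w.
Proof.
move=> f_line; apply/rowP => i; rewrite mxE derive_lineE.
under eq_fun do rewrite f_line.
apply: derive_val; apply: is_derive_eq.
by rewrite add0r mul1r scale0r add0r -[_%:A]/(_ * 1) mulr1.
Qed.

Lemma dotp_delta_line t w i (h : R) :
  dotp (h *: delta_mx 0 i + t) w = h * w 0 i + dotp t w.
Proof.
rewrite /dotp; under eq_bigr do rewrite !mxE mulrDl.
rewrite big_split /= (bigD1 i) //= big1 ?addr0; first by rewrite eqxx mulr1.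
by move=> j /negbTE ji; rewrite ji mulr0 mul0r.
Qed.

Lemma enorm_ge0 v : 0 <= enorm v.
Proof. exact: sqrtr_ge0. Qed.

Lemma enorm_sqr v : enorm v ^+ 2 = \sum_i v 0 i ^+ 2.
Proof.
rewrite /enorm sqr_sqrtr; last by apply: sumr_ge0 => i _; rewrite -expr2 sqr_ge0.
by apply: eq_bigr => i _; rewrite expr2.
Qed.

Lemma enorm_sqr_le v (P : R) : enorm v <= P -> enorm v ^+ 2 <= P ^+ 2.
Proof.
by move=> vP; rewrite lerXn2r ?nnegrE ?enorm_ge0 ?(le_trans (enorm_ge0 v)).
Qed.

Lemma enormZ_sqr (c : R) v : enorm (c *: v) ^+ 2 = c ^+ 2 * enorm v ^+ 2.
Proof.
by rewrite !enorm_sqr mulr_sumr; apply: eq_bigr => i _; rewrite mxE exprMn.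
Qed.

Lemma enormB_sqr_le u v : enorm (u - v) ^+ 2 <= 2 * enorm u ^+ 2 + 2 * enorm v ^+ 2.
Proof.
rewrite !enorm_sqr !mulr_sumr -big_split /=.
by apply: ler_sum => i _; rewrite !mxE sqr_subr_le.
Qed.

End EuclideanRows.

Section LogLinearPolicy.
Variables (R : realType) (d : nat) (X : Type) (Y : finType).
Variable phi : X -> Y -> 'rV[R]_d.
Implicit Types (t : 'rV[R]_d) (x : X) (y : Y).

Lemma policy_gt0 t x y : 0 < policy phi t x y.
Proof. by rewrite /policy divr_gt0 ?expR_gt0 // (sumr_expR_gt0 y). Qed.

Lemma sum_policy t x (y0 : Y) : \sum_(y : Y) policy phi t x y = 1.
Proof. by rewrite /policy -mulr_suml divff // gt_eqF // (sumr_expR_gt0 y0). Qed.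

Lemma h_betaE theta_ref beta t x yw yl :
  h_beta phi theta_ref beta t x yw yl =
  beta * (dotp t (phi x yw) - dotp t (phi x yl))
  - beta * (dotp theta_ref (phi x yw) - dotp theta_ref (phi x yl)).
Proof.
rewrite /h_beta !ln_div ?posrE ?policy_gt0 ?expR_gt0 ?(sumr_expR_gt0 yw) //.
by rewrite !expRK; ring.
Qed.

Lemma grad_h_beta theta_ref beta t x yw yl :
  grad (fun t => h_beta phi theta_ref beta t x yw yl) t =
  beta *: (phi x yw - phi x yl).
Proof.
apply: grad_affine => i h.
by rewrite !h_betaE !dotp_delta_line !mxE; ring.
Qed.

Lemma g_DPOE theta_ref beta t x yw yl :
  g_DPO phi theta_ref beta t x yw yl =
  (- ((1 - sigmoid (h_beta phi theta_ref beta t x yw yl)) * beta))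
    *: (phi x yw - phi x yl).
Proof. by rewrite /g_DPO grad_h_beta scalerA scaleNr. Qed.

Definition mean_feature t x : 'rV[R]_d := \sum_(y : Y) policy phi t x y *: phi x y.

Lemma mean_feature_entry t x i :
  mean_feature t x 0 i = \sum_(y : Y) policy phi t x y * phi x y 0 i.
Proof. by rewrite /mean_feature summxE; apply: eq_bigr => y _; rewrite mxE. Qed.

Lemma grad_policy t x y i :
  grad (fun t => policy phi t x y) t 0 i =
  policy phi t x y * (phi x y 0 i - mean_feature t x 0 i).
Proof.
set e := fun y' => expR (dotp t (phi x y')); set S := \sum_(y' : Y) e y'.
have S_neq0 : S != 0 by rewrite gt_eqF // (sumr_expR_gt0 y).
pose num (h : R) := expR (h * phi x y 0 i + dotp t (phi x y)).
pose den (h : R) := \sum_(y' : Y) expR (h * phi x y' 0 i + dotp t (phi x y')).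
have den0 : den 0 = S by apply: eq_bigr => y' _; rewrite mul0r add0r.
have den_der : is_derive (0 : R) 1 den (\sum_(y' : Y) e y' * phi x y' 0 i).
  exact: is_derive_big (fun y' => is_derive_expR_affine _ _).
have den0_neq0 : den 0 != 0 by rewrite den0.
have quot_der :=
  is_deriveM (is_derive_expR_affine (phi x y 0 i) (dotp t (phi x y)))
             (is_deriveV den0_neq0 den_der).
have lineE : (fun h => policy phi (h *: delta_mx 0 i + t) x y) =
             num * (fun h => (den h)^-1).
  apply/funext => h; rewrite /policy /num /den !dotp_delta_line /=.
  by under eq_bigr do rewrite dotp_delta_line.
rewrite mxE derive_lineE lineE (@derive_val _ _ _ _ _ _ _ quot_der).
rewrite /num den0 mul0r add0r.
rewrite mean_feature_entry /policy -/(e _) -/S.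
under [X in _ = _ * (_ - X)]eq_bigr do rewrite -/(e _) -/S mulrAC.
by rewrite -mulr_suml /GRing.scale /=; field.
Qed.

Lemma g_SFTE t x y : g_SFT phi t x y = mean_feature t x - phi x y.
Proof.
apply/rowP => i; rewrite /g_SFT; move: (grad_policy t x y i).
set G := grad _ _; clearbody G => G_i.
by rewrite !mxE G_i mulrA mulVf ?gt_eqF ?policy_gt0 // mul1r opprB.
Qed.

Lemma enorm_mean_feature_sqr_le t x (y0 : Y) (Phi : R) :
  (forall y, enorm (phi x y) <= Phi) -> enorm (mean_feature t x) ^+ 2 <= Phi ^+ 2.
Proof.
move=> phi_le; rewrite enorm_sqr.
have pi_ge0 y : 0 <= policy phi t x y by rewrite ltW ?policy_gt0.
apply: (@le_trans _ _ (\sum_i \sum_(y : Y) policy phi t x y * phi x y 0 i ^+ 2)).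
  apply: ler_sum => i _; rewrite mean_feature_entry.
  exact: sqr_convex_comb_le pi_ge0 (sum_policy t x y0).
rewrite exchange_big /= -[leRHS]mul1r -(sum_policy t x y0) mulr_suml.
apply: ler_sum => y _; rewrite -mulr_sumr -enorm_sqr.
by rewrite ler_wpM2l ?enorm_sqr_le.
Qed.

End LogLinearPolicy.

Section GradientBounds.
Variables (R : realType) (d : nat) (X : Type) (Y : finType).
Variables (phi : X -> Y -> 'rV[R]_d) (Phi : R).
Hypothesis phi_le : forall x y, enorm (phi x y) <= Phi.

Lemma enorm_g_DPO_sqr_le theta_ref beta t x yw yl :
  enorm (g_DPO phi theta_ref beta t x yw yl) ^+ 2 <= (2 * beta * Phi) ^+ 2.
Proof.
rewrite g_DPOE enormZ_sqr sqrrN !exprMn -mulrA.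
set c := 1 - sigmoid _; set D := enorm _ ^+ 2.
have c_sqr_le1 : c ^+ 2 <= 1.
  have := sigmoid_ge0 (h_beta phi theta_ref beta t x yw yl).
  have := sigmoid_le1 (h_beta phi theta_ref beta t x yw yl).
  rewrite /c; nra.
have D_le : D <= 4 * Phi ^+ 2.
  have := enormB_sqr_le (phi x yw) (phi x yl).
  have := enorm_sqr_le (phi_le x yw); have := enorm_sqr_le (phi_le x yl).
  rewrite -/D; lra.
have beta_D_ge0 : 0 <= beta ^+ 2 * D by rewrite mulr_ge0 ?sqr_ge0.
have := ler_piMl beta_D_ge0 c_sqr_le1; have := ler_wpM2l (sqr_ge0 beta) D_le.
lra.
Qed.

Lemma enorm_g_SFT_sqr_le t x y : enorm (g_SFT phi t x y) ^+ 2 <= (2 * Phi) ^+ 2.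
Proof.
rewrite g_SFTE; apply: le_trans (enormB_sqr_le _ _) _.
have := enorm_mean_feature_sqr_le t y (phi_le x).
have := enorm_sqr_le (phi_le x y).
rewrite exprMn; lra.
Qed.

End GradientBounds.

Theorem propositionA1 (R : realType) (d : nat) (X : Type) (Y : finType)
  (Theta : set 'rV[R]_d) (phi : X -> Y -> 'rV[R]_d) (theta_ref : 'rV[R]_d)
  (beta : R) (D_DPO : seq (X * Y * Y)) (D_SFT : seq (X * Y)) (Phi : R) :
  0 < beta -> 0 < Phi ->
  (forall (x : X) (y : Y), enorm (phi x y) <= Phi) ->
  exists M1 M2 : R, 0 < M1 /\ 0 < M2 /\
    forall theta : 'rV[R]_d, theta \in Theta ->
      (size D_DPO)%:R^-1 *
        \sum_(s <- D_DPO) enorm (g_DPO phi theta_ref beta theta s.1.1 s.1.2 s.2) ^+ 2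
        <= M1 ^+ 2 /\
      (size D_SFT)%:R^-1 *
        \sum_(s <- D_SFT) enorm (g_SFT phi theta s.1 s.2) ^+ 2
        <= M2 ^+ 2.
Proof.
move=> beta_gt0 Phi_gt0 phi_le; exists (2 * beta * Phi), (2 * Phi).
do 2 (split; first by rewrite !mulr_gt0).
move=> theta _; split; apply: avg_le; rewrite ?sqr_ge0 // => s.
  exact: enorm_g_DPO_sqr_le.
exact: enorm_g_SFT_sqr_le.
Qed.
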